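(* There exist two disjoint visibly pushdown alphabets $\widetilde{\Sigma}_1,\widetilde{\Sigma}_2$ and well-matched visibly pushdown languages $P_1\subseteq\widetilde{\Sigma}_1^*$, $P_2\subseteq\widetilde{\Sigma}_2^*$ such that the set of minimal reductions of $P_1\parallel P_2$ under the commutativity relation $\mathbb{I}$ is not countable.
   Context: A visibly pushdown (VP) alphabet $\widetilde{\Sigma}$ is a finite alphabet partitioned into calls $\Sigma^{\mathsf{call}}$, returns $\Sigma^{\mathsf{ret}}$ and internals $\Sigma^{\mathsf{int}}$. In a word over $\widetilde{\Sigma}$, calls and returns are matched like opening and closing parentheses (internals are ignored); unmatched calls (returns) are pending; a word is well-matched if it has no pending calls or returns. A visibly pushdown language (VPL) is a language accepted by a visibly pushdown automaton (a pushdown automaton that pushes exactly one stack symbol on reading a call, pops exactly one on reading a return, and does not touch the stack on an internal). For $\widetilde{\Sigma}=\widetilde{\Sigma}_1\uplus\widetilde{\Sigma}_2$ and $L_i\subseteq\widetilde{\Sigma}_i^*$, the shuffle is $L_1\parallel L_2=\{w\in\widetilde{\Sigma}^*:\Pi_{\widetilde{\Sigma}_i}(w)\in L_i \text{ for } i=1,2\}$, where $\Pi_{\widetilde{\Sigma}_i}$ erases letters not in $\widetilde{\Sigma}_i$. Let $\mathbb{I}=\{(a,b): a\in\widetilde{\Sigma}_i,\ b\in\widetilde{\Sigma}_j,\ i\neq j\}$ and let $\equiv_{\mathbb{I}}$ be the least reflexive transitive relation on $\widetilde{\Sigma}^*$ with $uabv\equiv_{\mathbb{I}}ubav$ whenever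 $(a,b)\in\mathbb{I}$. For a language $L$, a subset $\widehat{L}\subseteq L$ is a reduction if every $\rho\in L$ has some $\sigma\in\widehat{L}$ with $\sigma\equiv_{\mathbb{I}}\rho$; it is minimal if there is exactly one such $\sigma$ for every $\rho$. *)

From mathcomp Require Import all_boot.
From Stdlib Require Import Relations.

Set Implicit Arguments. Unset Strict Implicit. Unset Printing Implicit Defensive.

Inductive vpkind := Call | Ret | Int.

(* A VP alphabet is a finType S together with kind : S -> vpkind,
   partitioning S into calls, returns and internals. *)

Definition lang (S : Type) := seq S -> Prop.

(* Well-matched words: every return matched by an earlier call and no
   pending calls. wm_aux d w : current depth of pending calls is d. *)
Fixpoint wm_aux (S : Type) (k : S -> vpkind) (d : nat) (w : seq S) : bool :=
  match w with
  | [::] => d == 0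
  | a :: w' =>
      match k a with
      | Call => wm_aux k d.+1 w'
      | Ret => if d is d'.+1 then wm_aux k d' w' else false
      | Int => wm_aux k d w'
      end
  end.

Definition well_matched (S : Type) (k : S -> vpkind) (w : seq S) : bool :=
  wm_aux k 0 w.

Definition well_matched_lang (S : Type) (k : S -> vpkind) (L : lang S) : Prop :=
  forall w, L w -> well_matched k w.

(* Visibly pushdown automata (Alur-Madhusudan): a finite set of states,
   a finite stack alphabet, initial and final states; a call pushes one
   stack symbol, a return pops one (or reads the empty-stack bottom,
   encoded by None, leaving the stack empty), an internal leaves the
   stack untouched. *)
Record VPA (S : Type) := {
  vstate : finType;
  vstack : finType;
  vinit : pred vstate;
  vfinal : pred vstate;
  dcall : vstate -> S -> vstate -> vstack -> bool;
  dret  : vstate -> S -> option vstack -> vstate -> bool;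
  dint  : vstate -> S -> vstate -> bool
}.
Arguments vinit {S} v _.
Arguments vfinal {S} v _.
Arguments dcall {S} v _ _ _ _.
Arguments dret {S} v _ _ _ _.
Arguments dint {S} v _ _ _.

Inductive vrun {S : Type} (k : S -> vpkind) (A : VPA S) :
  vstate A -> seq (vstack A) -> seq S -> vstate A -> seq (vstack A) -> Prop :=
| vrun_nil q st : @vrun S k A q st [::] q st
| vrun_call q st a q' g w q'' st'' :
    k a = Call -> dcall A q a q' g -> @vrun S k A q' (g :: st) w q'' st'' ->
    @vrun S k A q st (a :: w) q'' st''
| vrun_ret q g st a q' w q'' st'' :
    k a = Ret -> dret A q a (Some g) q' -> @vrun S k A q' st w q'' st'' ->
    @vrun S k A q (g :: st) (a :: w) q'' st''
| vrun_ret_bot q a q' w q'' st'' :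
    k a = Ret -> dret A q a None q' -> @vrun S k A q' [::] w q'' st'' ->
    @vrun S k A q [::] (a :: w) q'' st''
| vrun_int q st a q' w q'' st'' :
    k a = Int -> dint A q a q' -> @vrun S k A q' st w q'' st'' ->
    @vrun S k A q st (a :: w) q'' st''.

Definition vaccepts (S : Type) (k : S -> vpkind) (A : VPA S) (w : seq S) : Prop :=
  exists q0 qf st, vinit A q0 /\ vfinal A qf /\ @vrun S k A q0 [::] w qf st.

Definition is_VPL (S : Type) (k : S -> vpkind) (L : lang S) : Prop :=
  exists A : VPA S, forall w, L w <-> vaccepts k A w.

Definition sum_kind (S1 S2 : Type) (k1 : S1 -> vpkind) (k2 : S2 -> vpkind)
  (x : S1 + S2) : vpkind :=
  match x with inl a => k1 a | inr b => k2 b end.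

Definition proj1w (S1 S2 : Type) (w : seq (S1 + S2)) : seq S1 :=
  pmap (fun x => match x with inl a => Some a | inr _ => None end) w.
Definition proj2w (S1 S2 : Type) (w : seq (S1 + S2)) : seq S2 :=
  pmap (fun x => match x with inl _ => None | inr b => Some b end) w.

Definition shuffle (S1 S2 : Type) (L1 : lang S1) (L2 : lang S2) : lang (S1 + S2) :=
  fun w => L1 (proj1w w) /\ L2 (proj2w w).

Definition indep (S1 S2 : Type) (x y : S1 + S2) : Prop :=
  match x, y with
  | inl _, inr _ => True
  | inr _, inl _ => True
  | _, _ => False
  end.

Definition swap_step (S1 S2 : Type) (w1 w2 : seq (S1 + S2)) : Prop :=
  exists u v a b, indep a b /\ w1 = u ++ a :: b :: v /\ w2 = u ++ b :: a :: v.

Definition trace_equiv (S1 S2 : Type) : relation (seq (S1 + S2)) :=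
  clos_refl_trans _ (@swap_step S1 S2).

Definition is_reduction (S1 S2 : Type) (L Lh : lang (S1 + S2)) : Prop :=
  (forall w, Lh w -> L w) /\
  (forall rho, L rho -> exists sigma, Lh sigma /\ trace_equiv sigma rho).

Definition is_minimal_reduction (S1 S2 : Type) (L Lh : lang (S1 + S2)) : Prop :=
  (forall w, Lh w -> L w) /\
  (forall rho, L rho -> exists! sigma, Lh sigma /\ trace_equiv sigma rho).

Definition countable_coll (T : Type) (C : T -> Prop) : Prop :=
  exists f : T -> nat, forall x y, C x -> C y -> f x = f y -> x = y.

From mathcomp Require Import all_boot.
From Stdlib Require Import Relations Classical.

Set Implicit Arguments. Unset Strict Implicit. Unset Printing Implicit Defensive.

(* Take one internal letter a in the first alphabet and one internal letter b
   in the second, with P1 = a^* and P2 = {b}.  The shuffle is {a^i b a^j}, and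
   its commutation classes are indexed by n = i + j; each class contains both
   b a^n and a^n b, which differ as soon as n > 0.  Choosing one of the two in
   every class is a minimal reduction, and distinct subsets of the positive
   integers give distinct choices, so Cantor's diagonal argument forbids an
   injection of the minimal reductions into nat. *)

Lemma not_countable_pred_family (T : Type) (C : T -> Prop)
    (L : (nat -> Prop) -> T) :
  (forall P, C (L P)) ->
  (forall P Q n, L P = L Q -> P n.+1 -> Q n.+1) ->
  ~ countable_coll C.
Proof.
move=> CL Linj [f f_inj].
pose D n := exists P, f (L P) = n.-1 /\ ~ P n.
have nDm : ~ D (f (L D)).+1.
  move=> Dm; have [P [fP nP]] := Dm; apply: nP (Linj D P _ _ Dm).
  exact: f_inj (CL D) (CL P) (esym fP).
by apply: (nDm); exists D.
Qed.

Section TraceEquivalence.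

Variables S1 S2 : Type.
Implicit Types w u v : seq (S1 + S2).

Lemma proj1w_cat u v : proj1w (u ++ v) = proj1w u ++ proj1w v.
Proof. exact: pmap_cat. Qed.

Lemma proj2w_cat u v : proj2w (u ++ v) = proj2w u ++ proj2w v.
Proof. exact: pmap_cat. Qed.

Lemma trace_equiv_proj w w' : trace_equiv w w' ->
  proj1w w = proj1w w' /\ proj2w w = proj2w w'.
Proof.
elim=> {w w'} [w w' [u [v [a [b [ab [-> ->]]]]]] | // | w w' w'' _ [-> ->] _ //].
rewrite !proj1w_cat !proj2w_cat.
by case: a b ab => a [b|b].
Qed.

Lemma trace_equiv_catl u w w' :
  trace_equiv w w' -> trace_equiv (u ++ w) (u ++ w').
Proof.
elim=> {w w'} [w w' [u' [v [a [b [ab [-> ->]]]]]] | w | w w' w'' _ IH1 _ IH2].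
- by apply: rt_step; exists (u ++ u'), v, a, b; rewrite -!catA.
- exact: rt_refl.
- exact: rt_trans IH2.
Qed.

Lemma trace_equiv_move (T : Type) (f : T -> S1 + S2) x (s : seq T) w :
  (forall t, indep (f t) x) ->
  trace_equiv (map f s ++ x :: w) (x :: map f s ++ w).
Proof.
move=> fx; elim: s => [|t s IH] /=; first exact: rt_refl.
apply: rt_trans (trace_equiv_catl [:: f t] IH) _.
by apply: rt_step; exists [::], (map f s ++ w), (f t), x.
Qed.

Lemma trace_equiv_inl_inr w :
  trace_equiv (map inl (proj1w w) ++ map inr (proj2w w)) w.
Proof.
elim: w => [|[a|b] w IH] /=; first exact: rt_refl.
  exact: (trace_equiv_catl [:: inl a] IH).
apply: rt_trans (trace_equiv_catl [:: inr b] IH).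
exact: trace_equiv_move.
Qed.

Lemma trace_equiv_inr_inl w :
  trace_equiv (map inr (proj2w w) ++ map inl (proj1w w)) w.
Proof.
elim: w => [|[a|b] w IH] /=; first exact: rt_refl.
  apply: rt_trans (trace_equiv_catl [:: inl a] IH).
  exact: trace_equiv_move.
exact: (trace_equiv_catl [:: inr b] IH).
Qed.

End TraceEquivalence.

Lemma is_VPL_total (S : Type) (k : S -> vpkind) : is_VPL k (fun _ => True).
Proof.
pose A := @Build_VPA S unit unit predT predT (fun _ _ _ _ => true)
  (fun _ _ _ _ => true) (fun _ _ _ => true).
exists A => w; split=> // _.
suff [st' run] : exists st', @vrun S k A tt [::] w tt st' by exists tt, tt, st'.
elim: w [::] => [|a w IH] st; first by exists st; apply: vrun_nil.
have [st' run] :=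
  IH (match k a with Call => tt :: st | Ret => behead st | Int => st end).
exists st'; case ka: (k a) run => run; first exact: vrun_call run.
- by case: st run => [|g st] run;
    [apply: vrun_ret_bot ka _ run | apply: vrun_ret ka _ run].
- by apply: vrun_int ka _ run.
Qed.

Lemma is_VPL_letter (S : eqType) (k : S -> vpkind) (a : S) :
  k a = Int -> is_VPL k (fun w => w = [:: a]).
Proof.
move=> ka.
pose A := @Build_VPA S bool unit negb idfun (fun _ _ _ _ => false)
  (fun _ _ _ _ => false) (fun q x q' => ~~ q && q' && (x == a)).
exists A => w; split.
  move=> ->; exists false, true, [::]; split=> //; split=> //.
  apply: (@vrun_int _ _ A false [::] a true) => //=; exact: vrun_nil.
case=> q0 [qf [st [q0F [qfT run]]]].
have inv q st1 w1 q' st2 : @vrun S k A q st1 w1 q' st2 ->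
    if q then w1 = [::] else q' -> w1 = [:: a].
  elim=> {q st1 w1 q' st2} [[] // | // | // | // |].
  by move=> [] // ? ? q' ? ? ? _ /andP[/andP[_ ->] /eqP ->] _ ->.
by move: (inv _ _ _ _ _ run); rewrite (negbTE q0F); apply.
Qed.

Lemma well_matched_internal (S : Type) (w : seq S) :
  well_matched (fun _ => Int) w.
Proof. by elim: w. Qed.

Definition b_first n : seq (unit + unit) := inr tt :: nseq n (inl tt).
Definition b_last n : seq (unit + unit) := nseq n (inl tt) ++ [:: inr tt].

Definition choice_lang (P : nat -> Prop) : lang (unit + unit) := fun w =>
  exists n, (P n /\ w = b_first n) \/ (~ P n /\ w = b_last n).

Lemma proj_b_first n :
  proj1w (b_first n) = nseq n tt /\ proj2w (b_first n) = [:: tt].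
Proof. by elim: n => //= n [-> ->]. Qed.

Lemma proj_b_last n :
  proj1w (b_last n) = nseq n tt /\ proj2w (b_last n) = [:: tt].
Proof. by elim: n => //= n [-> ->]. Qed.

Lemma choice_lang_proj2w P w : choice_lang P w -> proj2w w = [:: tt].
Proof.
by case=> n [[_ ->] | [_ ->]];
  [exact: (proj_b_first n).2 | exact: (proj_b_last n).2].
Qed.

Lemma choice_lang_uniq P w w' : choice_lang P w -> choice_lang P w' ->
  proj1w w = proj1w w' -> w = w'.
Proof.
have size_b_first n : size (proj1w (b_first n)) = n.
  by rewrite (proj_b_first n).1 size_nseq.
have size_b_last n : size (proj1w (b_last n)) = n.
  by rewrite (proj_b_last n).1 size_nseq.
case=> n [[Pn ->] | [Pn ->]] [m [[Pm ->] | [Pm ->]]] /(congr1 size);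
  rewrite ?size_b_first ?size_b_last => nm; subst m => //; by case: Pn.
Qed.

Lemma unit_seqE (s : seq unit) : s = nseq (size s) tt.
Proof. by elim: s => [|[] s IH] //=; rewrite -IH. Qed.

Lemma choice_lang_exists P rho : proj2w rho = [:: tt] ->
  exists2 sigma, choice_lang P sigma & trace_equiv sigma rho.
Proof.
move=> rho2; set n := size (proj1w rho).
have rho1 : proj1w rho = nseq n tt by exact: unit_seqE.
have [Pn | nPn] := classic (P n).
- exists (b_first n); first by exists n; left.
  by have := trace_equiv_inr_inl rho; rewrite rho1 rho2 /= map_nseq.
- exists (b_last n); first by exists n; right.
  by have := trace_equiv_inl_inr rho; rewrite rho1 rho2 /= map_nseq.
Qed.

Lemma choice_lang_minimal P :
  is_minimal_reduction
    (shuffle (fun _ : seq unit => True) (fun s : seq unit => s = [:: tt]))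
    (choice_lang P).
Proof.
split=> [w /choice_lang_proj2w // |
         rho [_ /(choice_lang_exists P) [sigma Ls es]]].
exists sigma; split=> // s [Ls' es'].
apply: choice_lang_uniq Ls Ls' _.
by rewrite (trace_equiv_proj es).1 (trace_equiv_proj es').1.
Qed.

Lemma choice_lang_inj P Q n : choice_lang P = choice_lang Q -> P n.+1 -> Q n.+1.
Proof.
move=> PQ Pn.
have : choice_lang Q (b_first n.+1) by rewrite -PQ; exists n.+1; left.
case=> m [[Qm [/(congr1 size)] ] | [_]].
  by rewrite /= !size_nseq => ->.
by case: m => [|m] [].
Qed.

Theorem proposition3p2 :
  exists (S1 S2 : finType) (k1 : S1 -> vpkind) (k2 : S2 -> vpkind)
         (P1 : lang S1) (P2 : lang S2),
    is_VPL k1 P1 /\ well_matched_lang k1 P1 /\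
    is_VPL k2 P2 /\ well_matched_lang k2 P2 /\
    ~ countable_coll (is_minimal_reduction (shuffle P1 P2)).
Proof.
pose internal (_ : unit) := Int.
exists unit, unit, internal, internal, (fun _ => True), (fun s => s = [:: tt]).
split; first exact: is_VPL_total.
split; first by move=> w _; apply: well_matched_internal.
split; first exact: is_VPL_letter.
split; first by move=> w _; apply: well_matched_internal.
exact: (not_countable_pred_family choice_lang_minimal choice_lang_inj).
Qed.
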